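(* Let $i\in\arg\max_x w^{\text{avg}}_x$. There exists $\rho_0>0$ such that for every $\rho\in(0,\rho_0]$, $$\Delta=\mathcal{W}(D_{\text{mask}})-\mathcal{W}(D_{\text{fair}})\ \ge\ \rho\cdot\max\Big(0,\ \max_{j\ne i,\ p\in\{0,1\}}\big\{R_p(j)-w^{\text{avg}}_i\big\}\Big),$$ where $R_p(j)=\dfrac{w_{i,\bar p}+w_{j,p}}{\Pr(P=\bar p\mid x_i)+\Pr(P=p\mid x_j)}$ with $\bar p=1-p$. (In particular, for such $\rho$ the optimal fair value is $\mathcal{W}(D_{\text{fair}})=\rho\, w^{\text{avg}}_i$.)
   Context: Fix an integer $k\ge 2$, $X\in\{1,\dots,k\}$, $P\in\{0,1\}$, $\pi_{x,p}=\Pr(X=x,P=p)>0$ with $\sum_{x,p}\pi_{x,p}=1$, $\Pr(X=x)=\pi_{x,0}+\pi_{x,1}$, $\Pr(P=p\mid x)=\pi_{x,p}/\Pr(X=x)$; write $x_i$ for the event $X=i$. Rewards $\gamma_{x,p}\in[0,1]$. Define $w_{x,p}=\gamma_{x,p}\Pr(P=p\mid x)$ and $w^{\text{avg}}_x=w_{x,0}+w_{x,1}$. Policies are $\alpha\in[0,1]^{2k}$ with objective $\mathcal{W}(\alpha)=\sum_{x,p}\gamma_{x,p}\alpha_{x,p}\pi_{x,p}$ and participation constraint $\sum_{x,p}\alpha_{x,p}\pi_{x,p}=\rho$. $\mathcal{W}(D_{\text{fair}})$ is the optimal value of maximizing $\mathcal{W}$ over $\alpha\in[0,1]^{2k}$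 subject to the participation constraint and $\alpha_{x,1}=\alpha_{x,0}$ for all $x$. $\mathcal{W}(D_{\text{mask}})$ is the optimal value of maximizing $\mathcal{W}$ over $\alpha\in[0,1]^{2k}$ subject to the participation constraint and the zero-ATE (masking) constraint $\sum_{x=1}^k\Pr(X=x)(\alpha_{x,1}-\alpha_{x,0})=0$. *)

From HB Require Import structures.
From mathcomp Require Import all_boot all_order all_algebra.
From mathcomp Require Import classical_sets reals.
Set Implicit Arguments. Unset Strict Implicit. Unset Printing Implicit Defensive.
Import Order.TTheory GRing.Theory Num.Theory.
Local Open Scope ring_scope.
Local Open Scope classical_set_scope.

Section Defs.
Variables (R : realType) (k : nat).
(* X ranges over 'I_k (values 1..k relabelled 0..k-1), P over bool (false = 0, true = 1). *)
Variables (pi g : 'I_k -> bool -> R).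

Definition PrX (x : 'I_k) : R := pi x false + pi x true.
Definition condP (x : 'I_k) (p : bool) : R := pi x p / PrX x.
Definition w (x : 'I_k) (p : bool) : R := g x p * condP x p.
Definition wavg (x : 'I_k) : R := w x false + w x true.

Definition Wobj (a : 'I_k -> bool -> R) : R :=
  \sum_(x < k) \sum_(p : bool) g x p * a x p * pi x p.
Definition participation (a : 'I_k -> bool -> R) : R :=
  \sum_(x < k) \sum_(p : bool) a x p * pi x p.

Definition feasible (rho : R) (a : 'I_k -> bool -> R) : Prop :=
  (forall x p, 0 <= a x p <= 1) /\ participation a = rho.

Definition fair_set (rho : R) : set ('I_k -> bool -> R) :=
  [set a | feasible rho a /\ forall x, a x true = a x false].

Definition mask_set (rho : R) : set ('I_k -> bool -> R) :=
  [set a | feasible rho a /\ \sum_(x < k) PrX x * (a x true - a x false) = 0].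

(* optimal values (suprema; they are attained maxima for feasible rho) *)
Definition W_fair (rho : R) : R := sup [set Wobj a | a in fair_set rho].
Definition W_mask (rho : R) : R := sup [set Wobj a | a in mask_set rho].

Definition Rp (i j : 'I_k) (p : bool) : R :=
  (w i (~~ p) + w j p) / (condP i (~~ p) + condP j p).
End Defs.

(** Both programs are linear in the policy [a]. On the fair side [a x 0 = a x 1],
    so [W(a) = sum_x a_x Pr(X = x) w^avg_x <= rho w^avg_i], with equality for the
    policy spending all of [rho] on the cell [x_i]; this policy also has zero ATE.
    On the masking side, for [j <> i] and a value [p] of [P], spend mass [t] on the
    cell [(x_i, 1 - p)] and mass [t] on [(x_j, p)] (in units of [Pr(X = .)]): the two
    contributions to the ATE cancel, participation is [t (Pr(1-p|x_i) + Pr(p|x_j))],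
    and the welfare is [t (w_{i,1-p} + w_{j,p}) = rho R_p(j)]. Both policies lie in
    [[0,1]^{2k}] as soon as [rho] is at most the smallest [pi_{x,p}]. *)
From HB Require Import structures.
From mathcomp Require Import all_boot all_order all_algebra.
From mathcomp Require Import classical_sets reals.
From mathcomp Require Import ring lra.
Import Order.TTheory GRing.Theory Num.Theory.
Local Open Scope ring_scope.
Local Open Scope classical_set_scope.
Set Implicit Arguments. Unset Strict Implicit.

Section Policies.
Variables (R : realType) (k : nat).
Implicit Types (a b : 'I_k -> bool -> R) (F : 'I_k -> bool -> R).

Definition pol_form F a : R := \sum_(x < k) \sum_(p : bool) F x p * a x p.

Definition pol_add a b : 'I_k -> bool -> R := fun x p => a x p + b x p.

Definition point (y : 'I_k) (q : bool) (s : R) : 'I_k -> bool -> R :=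
  fun x p => if (x == y) && (p == q) then s else 0.

Lemma pol_formD F a b : pol_form F (pol_add a b) = pol_form F a + pol_form F b.
Proof.
rewrite /pol_form -big_split; apply: eq_bigr => x _.
by rewrite -big_split; apply: eq_bigr => p _; rewrite mulrDr.
Qed.

Lemma pol_form_point F y q s : pol_form F (point y q s) = F y q * s.
Proof.
rewrite /pol_form (bigD1 y) //= [X in _ + X]big1 => [|x xy]; last first.
  by rewrite big1 // => p _; rewrite /point (negbTE xy) mulr0.
by rewrite addr0 big_bool /point eqxx /=; case: q; rewrite /= mulr0 ?addr0 ?add0r.
Qed.

Lemma point_add_box y q z r s u : (y, q) != (z, r) ->
  0 <= s <= 1 -> 0 <= u <= 1 ->
  forall x p, 0 <= pol_add (point y q s) (point z r u) x p <= 1.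
Proof.
move=> yz s01 u01 x p; rewrite /pol_add /point.
case: ifP => [/andP[/eqP xy /eqP pq]|_].
  have -> : (x == z) && (p == r) = false.
    by apply/negbTE; apply: contra yz => /andP[/eqP <- /eqP <-]; rewrite xy pq.
  by rewrite addr0.
by rewrite add0r; case: ifP; rewrite ?lexx ?ler01.
Qed.

Variables (pi g : 'I_k -> bool -> R).

Lemma WobjE a : Wobj pi g a = pol_form (fun x p => g x p * pi x p) a.
Proof. by apply: eq_bigr => x _; apply: eq_bigr => p _; rewrite mulrAC. Qed.

Lemma participationE a : participation pi a = pol_form pi a.
Proof. by apply: eq_bigr => x _; apply: eq_bigr => p _; rewrite mulrC. Qed.

Lemma ate_sumE a : \sum_(x < k) PrX pi x * (a x true - a x false) =
  pol_form (fun x p => if p then PrX pi x else - PrX pi x) a.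
Proof. by apply: eq_bigr => x _; rewrite big_bool /=; ring. Qed.

Lemma fair_sub_mask rho : fair_set pi rho `<=` mask_set pi rho.
Proof.
by move=> a [fa eq_a]; split=> //; rewrite big1 // => x _; rewrite eq_a subrr mulr0.
Qed.

Hypothesis pi_gt0 : forall x p, 0 < pi x p.
Hypothesis g01 : forall x p, 0 <= g x p <= 1.

Lemma PrX_gt0 x : 0 < PrX pi x.
Proof. by rewrite addr_gt0. Qed.

Lemma condP_gt0 x p : 0 < condP pi x p.
Proof. by rewrite divr_gt0 ?PrX_gt0. Qed.

Lemma pi_le_PrX x p : pi x p <= PrX pi x.
Proof. by rewrite /PrX; have := pi_gt0 x false; have := pi_gt0 x true; case: p; lra. Qed.

Lemma PrX_mul_wavg x : PrX pi x * wavg pi g x = g x false * pi x false + g x true * pi x true.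
Proof. by rewrite /wavg /w /condP; field; rewrite gt_eqF ?PrX_gt0. Qed.

Lemma Wobj_le_participation a : (forall x p, 0 <= a x p) -> Wobj pi g a <= participation pi a.
Proof.
move=> a_ge0; apply: ler_sum => x _; apply: ler_sum => p _.
rewrite -mulrA ler_piMl // ?mulr_ge0 ?(ltW (pi_gt0 x p)) //.
by have /andP[] := g01 x p.
Qed.

Lemma Wobj_le_sup S rho a : S `<=` feasible pi rho -> S a ->
  Wobj pi g a <= sup [set Wobj pi g b | b in S].
Proof.
move=> S_feas Sa; apply: ub_le_sup; last by exists a.
exists rho => _ [b /S_feas [b01 <-] <-].
by apply: Wobj_le_participation => x p; have /andP[] := b01 x p.
Qed.

Lemma Wobj_fair_le i rho a : (forall x, wavg pi g x <= wavg pi g i) ->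
  fair_set pi rho a -> Wobj pi g a <= rho * wavg pi g i.
Proof.
move=> wavg_le [[a01 <-] eq_a]; rewrite mulr_suml; apply: ler_sum => x _.
have a_ge0 : 0 <= a x false by have /andP[] := a01 x false.
rewrite mulr_suml !big_bool /= eq_a.
have -> : g x true * a x false * pi x true + g x false * a x false * pi x false
   = a x false * (PrX pi x * wavg pi g x) by rewrite PrX_mul_wavg; ring.
have -> : a x false * pi x true * wavg pi g i + a x false * pi x false * wavg pi g i
   = a x false * (PrX pi x * wavg pi g i) by rewrite /PrX; ring.
by rewrite ler_wpM2l // ler_wpM2l ?(ltW (PrX_gt0 x)).
Qed.

Lemma fair_witness i rho : 0 <= rho <= PrX pi i ->
  exists2 a, fair_set pi rho a & Wobj pi g a = rho * wavg pi g i.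
Proof.
move=> /andP[rho_ge0 rho_le]; have Pi_gt0 := PrX_gt0 i.
pose s := rho / PrX pi i.
have s01 : 0 <= s <= 1 by rewrite divr_ge0 ?ler_pdivrMr // ?mul1r ?(ltW Pi_gt0).
exists (pol_add (point i false s) (point i true s)).
  split; [split|].
  - by apply: point_add_box; rewrite // xpair_eqE eqxx.
  - by rewrite participationE pol_formD !pol_form_point -mulrDl mulrC divfK ?gt_eqF.
  - by move=> x; rewrite /pol_add /point /=; case: (x == i); rewrite /= ?addr0 ?add0r.
rewrite WobjE pol_formD !pol_form_point -mulrDl -PrX_mul_wavg /s.
by field; rewrite gt_eqF.
Qed.

Lemma mask_witness i j p rho : j != i ->
  0 <= rho -> rho <= pi i (~~ p) -> rho <= pi j p ->
  exists2 a, mask_set pi rho a & Wobj pi g a = rho * Rp pi g i j p.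
Proof.
move=> ji rho_ge0 rho_le_i rho_le_j.
have Pi_gt0 := PrX_gt0 i; have Pj_gt0 := PrX_gt0 j.
set c := condP pi i (~~ p) + condP pi j p.
have c_gt0 : 0 < c by rewrite addr_gt0 ?condP_gt0.
pose t := rho / c.
have t_ge0 : 0 <= t by rewrite divr_ge0 // ltW.
(* [t / Pr(X = x) <= 1] iff [rho <= c Pr(X = x)],
   and [c Pr(X = x) >= Pr(q | x) Pr(X = x) = pi x q]. *)
have t_div_le1 x q : 0 < PrX pi x -> rho <= pi x q -> condP pi x q <= c ->
    0 <= t / PrX pi x <= 1.
  move=> Px_gt0 rho_le cond_le; rewrite divr_ge0 ?(ltW Px_gt0) //=.
  rewrite ler_pdivrMr // mul1r ler_pdivrMr //; apply: (le_trans rho_le).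
  by rewrite -(divfK (lt0r_neq0 Px_gt0) (pi x q)) mulrC ler_wpM2l ?(ltW Px_gt0).
exists (pol_add (point i (~~ p) (t / PrX pi i)) (point j p (t / PrX pi j))).
  split; [split|].
  - apply: point_add_box; first by rewrite xpair_eqE negb_and eq_sym ji.
      by apply: (t_div_le1 _ (~~ p)); rewrite // /c lerDl ltW ?condP_gt0.
    by apply: (t_div_le1 _ p); rewrite // /c lerDr ltW ?condP_gt0.
  - rewrite participationE pol_formD !pol_form_point.
    have -> : pi i (~~ p) * (t / PrX pi i) + pi j p * (t / PrX pi j) = t * c.
      by rewrite /c /condP; ring.
    by rewrite divfK ?gt_eqF.
  - rewrite ate_sumE pol_formD !pol_form_point.
    by case: (p) => /=; field; rewrite !lt0r_neq0.
rewrite WobjE pol_formD !pol_form_point /Rp -/c /t /w /condP.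
by field; rewrite !lt0r_neq0.
Qed.

Lemma Wobj_le_W_mask rho a : mask_set pi rho a -> Wobj pi g a <= W_mask pi g rho.
Proof. by move=> mask_a; apply: (Wobj_le_sup (rho := rho)) => // b []. Qed.

Lemma W_fair_eq i rho : (forall x, wavg pi g x <= wavg pi g i) ->
  0 <= rho <= PrX pi i -> W_fair pi g rho = rho * wavg pi g i.
Proof.
move=> wavg_le /fair_witness[a0 fair_a0 Wa0]; apply/le_anti/andP; split.
  apply: ge_sup => [|_ [a fair_a <-]]; first by exists (Wobj pi g a0), a0.
  exact: Wobj_fair_le wavg_le fair_a.
by rewrite -Wa0; apply: (Wobj_le_sup (rho := rho)) => // b [].
Qed.

End Policies.

Theorem mainTheorem3 (R : realType) (k : nat) (pi g : 'I_k -> bool -> R) (i : 'I_k) :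
  (2 <= k)%N ->
  (forall x p, 0 < pi x p) ->
  \sum_(x < k) \sum_(p : bool) pi x p = 1 ->
  (forall x p, 0 <= g x p <= 1) ->
  (forall x, wavg pi g x <= wavg pi g i) ->
  exists rho0 : R, 0 < rho0 /\
    forall rho : R, 0 < rho <= rho0 ->
      W_fair pi g rho = rho * wavg pi g i /\
      rho * \big[Num.max/0]_(j < k | j != i) \big[Num.max/0]_(p : bool)
              (Rp pi g i j p - wavg pi g i)
        <= W_mask pi g rho - W_fair pi g rho.
Proof.
move=> _ pi_gt0 _ g01 wavg_le.
pose m := \big[Num.min/1]_(xp : 'I_k * bool) pi xp.1 xp.2.
have m_le x p : m <= pi x p by exact: (bigmin_le _ (x, p) (fun xp => pi xp.1 xp.2)).
exists m; split=> [|rho /andP[rho_gt0 rho_le_m]]; first by apply: lt_bigmin.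
have rho_le x p : rho <= pi x p := le_trans rho_le_m (m_le x p).
have rho_ge0 := ltW rho_gt0.
have rho_le_PrX : 0 <= rho <= PrX pi i.
  by rewrite rho_ge0 (le_trans (rho_le i false)) ?pi_le_PrX.
have W_fairE := W_fair_eq pi_gt0 g01 wavg_le rho_le_PrX.
have [a0 fair_a0 Wa0] := fair_witness g pi_gt0 rho_le_PrX.
have W_fair_le_mask : rho * wavg pi g i <= W_mask pi g rho.
  by rewrite -Wa0; apply/(Wobj_le_W_mask pi_gt0 g01)/fair_sub_mask.
split=> //; rewrite W_fairE -ler_pdivlMl //.
apply: bigmax_le => [|j ji]; first by apply: mulr_ge0; rewrite ?invr_ge0 ?subr_ge0.
apply: bigmax_le => [|p _]; first by apply: mulr_ge0; rewrite ?invr_ge0 ?subr_ge0.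
have [a mask_a Wa] := mask_witness g pi_gt0 (p := p) ji rho_ge0 (rho_le _ _) (rho_le _ _).
by rewrite ler_pdivlMl // mulrBr lerD2r -Wa (Wobj_le_W_mask pi_gt0 g01).
Qed.
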